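(* For all positive integers $m,n$, $\theta(K_{m,n}\times K_2)=\theta(K_{m,n})$.
   Context: The thickness $\theta(G)$ of a graph $G$ is the minimum number of planar subgraphs whose union is $G$. The Kronecker product $G\times H$ of graphs $G$ and $H$ is the graph with vertex set $V(G)\times V(H)$ in which $(g,h)$ and $(g',h')$ are adjacent if and only if $gg'\in E(G)$ and $hh'\in E(H)$. $K_{a,b}$ denotes the complete bipartite graph with parts of sizes $a$ and $b$. *)

From Stdlib Require Export Reals.
Open Scope R_scope.

(* A drawing of the graph in R^2: distinct points for vertices, and for every
   edge a continuous injective arc [0,1] -> R^2 joining its endpoints, whose
   interior avoids all vertex points; arcs of distinct edges meet only in
   vertex points. *)
Definition planar (V : Type) (adj : V -> V -> Prop) : Prop :=
  exists (p : V -> R * R) (a : V -> V -> R -> R * R),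
    (forall u v, p u = p v -> u = v) /\
    (forall u v, adj u v ->
       continuity (fun t => fst (a u v t)) /\
       continuity (fun t => snd (a u v t)) /\
       a u v 0 = p u /\ a u v 1 = p v /\
       (forall s t, 0 <= s <= 1 -> 0 <= t <= 1 -> a u v s = a u v t -> s = t) /\
       (forall w t, 0 < t < 1 -> a u v t <> p w)) /\
    (forall u v u' v' s t, adj u v -> adj u' v' ->
       ~ ((u = u' /\ v = v') \/ (u = v' /\ v = u')) ->
       0 <= s <= 1 -> 0 <= t <= 1 -> a u v s = a u' v' t ->
       exists w, a u v s = p w).

(* G is the union of k planar (spanning) subgraphs: colour each edge with a
   colour < k so that every colour class is planar. *)
Definition thick_le (V : Type) (adj : V -> V -> Prop) (k : nat) : Prop :=
  exists c : V -> V -> nat,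
    (forall u v, adj u v -> (c u v < k)%nat /\ c u v = c v u) /\
    (forall i, (i < k)%nat -> planar V (fun u v => adj u v /\ c u v = i)).

Definition thickness (V : Type) (adj : V -> V -> Prop) (t : nat) : Prop :=
  thick_le V adj t /\ (forall k, thick_le V adj k -> (t <= k)%nat).

Definition KV (m n : nat) : Type := ({i : nat | (i < m)%nat} + {j : nat | (j < n)%nat})%type.
Definition Kmn_adj (m n : nat) (x y : KV m n) : Prop :=
  match x, y with
  | inl _, inr _ => True
  | inr _, inl _ => True
  | _, _ => False
  end.

Definition K2_adj (a b : bool) : Prop := a <> b.

Definition kron_adj {V W : Type} (adjG : V -> V -> Prop) (adjH : W -> W -> Prop)
  (x y : V * W) : Prop := adjG (fst x) (fst y) /\ adjH (snd x) (snd y).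

From Stdlib Require Import Reals Lra.

(* K_{m,n} x K_2 is the disjoint union of two copies of K_{m,n}, because
   K_{m,n} is bipartite; hence both graphs have the same thickness. *)

(* An intersection point of two V-arcs is a vertex
   point p (f w') of W; since arc interiors avoid vertex points, it is an
   endpoint of the arc, hence the image of a vertex of V. *)
Lemma planar_hom_inj (V W : Type) (adjV : V -> V -> Prop) (adjW : W -> W -> Prop)
    (f : V -> W) :
  (forall x y, f x = f y -> x = y) ->
  (forall x y, adjV x y -> adjW (f x) (f y)) ->
  planar W adjW -> planar V adjV.
Proof.
  intros f_inj f_hom [p [a [p_inj [arcs cross]]]].
  exists (fun x => p (f x)), (fun x y => a (f x) (f y)).
  split; [|split].
  - intros x y E. apply f_inj, p_inj, E.
  - intros x y Exy.
    destruct (arcs _ _ (f_hom _ _ Exy)) as [C1 [C2 [E0 [E1 [Inj Avoid]]]]].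
    repeat split; auto.
  - intros x y x' y' s t Exy Exy' Hne Hs Ht Hst.
    destruct (arcs _ _ (f_hom _ _ Exy)) as [_ [_ [E0 [E1 [_ Avoid]]]]].
    assert (distinct_edges : ~ ((f x = f x' /\ f y = f y') \/ (f x = f y' /\ f y = f x'))).
    { intros [[E3 E4] | [E3 E4]]; apply Hne;
        [left | right]; split; apply f_inj; assumption. }
    destruct (cross _ _ _ _ s t (f_hom _ _ Exy) (f_hom _ _ Exy') distinct_edges Hs Ht Hst)
      as [w Hw].
    destruct (Req_dec s 0) as [-> | Hs0]; [exists x; exact E0|].
    destruct (Req_dec s 1) as [-> | Hs1]; [exists y; exact E1|].
    exfalso. apply (Avoid w s); [lra | exact Hw].
Qed.

(* The same inheritance for colourings into k planar classes: colour an edge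
   of V by the colour of its image. *)
Lemma thick_le_hom_inj (V W : Type) (adjV : V -> V -> Prop) (adjW : W -> W -> Prop)
    (f : V -> W) (k : nat) :
  (forall x y, f x = f y -> x = y) ->
  (forall x y, adjV x y -> adjW (f x) (f y)) ->
  thick_le W adjW k -> thick_le V adjV k.
Proof.
  intros f_inj f_hom [c [c_ok c_planar]].
  exists (fun x y => c (f x) (f y)). split.
  - intros x y Exy. apply c_ok, f_hom, Exy.
  - intros i Hi.
    apply (planar_hom_inj _ _ _ (fun u v => adjW u v /\ c u v = i) f f_inj), (c_planar i Hi).
    intros x y [Exy Ci]. split; [apply f_hom|]; assumption.
Qed.

Definition two_copies {V : Type} (adj : V -> V -> Prop) (u v : V * bool) : Prop :=
  adj (fst u) (fst v) /\ snd u = snd v.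

Definition half_plane (b : bool) (q : R * R) : R * R :=
  (if b then exp (fst q) else - exp (fst q), snd q).

Lemma half_plane_inj (b b' : bool) (q q' : R * R) :
  half_plane b q = half_plane b' q' -> b = b' /\ q = q'.
Proof.
  destruct q as [x y], q' as [x' y']; unfold half_plane; simpl.
  intro E; injection E as Ex Ey; subst y'.
  pose proof (exp_pos x); pose proof (exp_pos x').
  destruct b, b'; try lra.
  - apply exp_inv in Ex; subst; auto.
  - assert (exp x = exp x') as Ex' by lra. apply exp_inv in Ex'; subst; auto.
Qed.

Lemma half_plane_continuous (b : bool) (q : R -> R * R) :
  continuity (fun t => fst (q t)) -> continuity (fun t => fst (half_plane b (q t))).
Proof.
  intro Hq. unfold half_plane; simpl.
  assert (Hexp : continuity (fun t => exp (fst (q t)))).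
  { apply (continuity_comp _ exp Hq), derivable_continuous, derivable_exp. }
  destruct b; [exact Hexp | apply (continuity_opp _ Hexp)].
Qed.

(* Copy b is drawn as the image of a drawing of G under [half_plane b]. *)
Lemma planar_two_copies (V : Type) (adj : V -> V -> Prop) :
  planar V adj -> planar (V * bool) (two_copies adj).
Proof.
  intros [p [a [p_inj [arcs cross]]]].
  exists (fun u => half_plane (snd u) (p (fst u))).
  exists (fun u v t => half_plane (snd u) (a (fst u) (fst v) t)).
  split; [|split].
  - intros [x b] [y b'] E. simpl in E. apply half_plane_inj in E as [-> E].
    apply p_inj in E. simpl in E. subst. reflexivity.
  - intros [x b] [y b'] [Exy Eb]; simpl in *. subst b'.
    destruct (arcs _ _ Exy) as [C1 [C2 [E0 [E1 [Inj Avoid]]]]].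
    split; [|split; [|split; [|split; [|split]]]].
    + apply half_plane_continuous, C1.
    + exact C2.
    + rewrite E0; reflexivity.
    + rewrite E1; reflexivity.
    + intros s t Hs Ht E. apply half_plane_inj in E as [_ E]. auto.
    + intros [w bw] t Ht E. apply half_plane_inj in E as [_ E].
      exact (Avoid w t Ht E).
  - intros [x b] [y b2] [x' b'] [y' b2'] s t [Exy Eb] [Exy' Eb'] Hne Hs Ht E.
    simpl in *. subst b2 b2'.
    apply half_plane_inj in E as [<- E].
    destruct (cross x y x' y' s t Exy Exy') as [w Hw]; auto.
    + intros [[-> ->] | [-> ->]]; apply Hne; auto.
    + exists (w, b). simpl. rewrite Hw. reflexivity.
Qed.

(* Colouring each copy like G shows thickness(2G) <= thickness(G): colour
   class i of 2G is, up to reordering conjuncts, two copies of class i of G. *)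
Lemma thick_le_two_copies (V : Type) (adj : V -> V -> Prop) (k : nat) :
  thick_le V adj k -> thick_le (V * bool) (two_copies adj) k.
Proof.
  intros [c [c_ok c_planar]].
  exists (fun u v => c (fst u) (fst v)). split.
  - intros u v [Euv _]. apply c_ok, Euv.
  - intros i Hi.
    apply (planar_hom_inj _ _ _ (two_copies (fun x y => adj x y /\ c x y = i)) (fun u => u));
      auto.
    + intros u v [[Euv Eb] Ci]. repeat split; assumption.
    + apply planar_two_copies, c_planar, Hi.
Qed.

Lemma K2_adj_negb (b b' : bool) : K2_adj b b' -> b' = negb b.
Proof. unfold K2_adj; destruct b, b'; simpl; congruence. Qed.

Section Bipartite.
Variables (V : Type) (adj : V -> V -> Prop) (side : V -> bool).
Hypothesis side_proper : forall x y, adj x y -> side y = negb (side x).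

Lemma kron_K2_into_two_copies :
  forall u v, kron_adj adj K2_adj u v ->
    two_copies adj (fst u, xorb (snd u) (side (fst u)))
                   (fst v, xorb (snd v) (side (fst v))).
Proof.
  intros [x b] [y b'] [Exy Eb]; simpl in *. split; [exact Exy|]. simpl.
  rewrite (side_proper _ _ Exy), (K2_adj_negb _ _ Eb).
  destruct b, (side x); reflexivity.
Qed.

Lemma G_into_kron_K2 :
  forall x y, adj x y -> kron_adj adj K2_adj (x, side x) (y, side y).
Proof.
  intros x y Exy. split; [exact Exy|]. simpl.
  rewrite (side_proper _ _ Exy). unfold K2_adj. destruct (side x); discriminate.
Qed.

(* G and G x K_2 admit decompositions into the same numbers of planar
   subgraphs: each graph embeds into the other or into two copies of it. *)
Lemma thick_le_kron_K2 (k : nat) :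
  thick_le (V * bool) (kron_adj adj K2_adj) k <-> thick_le V adj k.
Proof.
  split; intro Hk.
  - apply (thick_le_hom_inj _ _ _ (kron_adj adj K2_adj) (fun x => (x, side x)) k).
    + intros x y E. injection E; auto.
    + exact G_into_kron_K2.
    + exact Hk.
  - apply (thick_le_hom_inj _ _ _ (two_copies adj)
             (fun u => (fst u, xorb (snd u) (side (fst u)))) k).
    + intros [x b] [y b'] E. simpl in E. injection E as -> Eb.
      f_equal. destruct b, b', (side y); simpl in *; congruence.
    + exact kron_K2_into_two_copies.
    + apply thick_le_two_copies, Hk.
Qed.

End Bipartite.

Lemma thickness_iff (V W : Type) (adjV : V -> V -> Prop) (adjW : W -> W -> Prop) :
  (forall k, thick_le V adjV k <-> thick_le W adjW k) ->
  forall t, thickness V adjV t <-> thickness W adjW t.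
Proof.
  intros Hk t. unfold thickness.
  split; intros [Ht Hmin]; split; try apply Hk, Ht;
    intros k Hle; apply Hmin, Hk, Hle.
Qed.

Definition Kmn_side {m n : nat} (x : KV m n) : bool :=
  match x with inl _ => false | inr _ => true end.

Lemma Kmn_side_proper (m n : nat) (x y : KV m n) :
  Kmn_adj m n x y -> Kmn_side y = negb (Kmn_side x).
Proof. destruct x, y; simpl; tauto. Qed.

Theorem corollary3p7 (m n : nat) : (0 < m)%nat -> (0 < n)%nat ->
  forall t : nat,
    thickness (KV m n * bool) (kron_adj (Kmn_adj m n) K2_adj) t <->
    thickness (KV m n) (Kmn_adj m n) t.
Proof.
  intros _ _. apply thickness_iff. intro k.
  apply (thick_le_kron_K2 _ _ Kmn_side), Kmn_side_proper.
Qed.
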